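(* For all $s,k,i=1,\dots,n$, the contravariant Christoffel symbol $\Gamma^{si}_k(u)$ of $g$, written as a polynomial in the basic invariants $u_1,\dots,u_n$, depends at most linearly on $u_{n-1}$.
   Context: $n\ge2$. $g$ is the cometric $g^{ij}(p)=\frac{1-\delta^{ij}}{p_ip_j}$ on $\mathbb{C}^n$ (inverse metric $g_{ij}(p)=(\frac{1}{n-1}-\delta_{ij})p_ip_j$), invariant under $B_n$ acting by permutations and sign changes of coordinates. $u_m=\sum_{1\le i_1<\dots<i_m\le n}p_{i_1}^2\cdots p_{i_m}^2$ ($m=1,\dots,n$) are coordinates on the orbit space, $g^{ij}(u)=\sum_{k,l}g^{kl}(p)\frac{\partial u_i}{\partial p_k}\frac{\partial u_j}{\partial p_l}$, $\Gamma^j_{sk}(u)$ are the Christoffel symbols of the Levi-Civita connection of $g$ in these coordinates, and $\Gamma^{si}_k(u)=-\sum_j g^{sj}(u)\Gamma^i_{jk}(u)$, which are polynomials in $u$. *)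

From HB Require Import structures.
From mathcomp Require Import all_boot all_order all_algebra.
From mathcomp Require Import mpoly.
Set Implicit Arguments. Unset Strict Implicit. Unset Printing Implicit Defensive.
Import Order.TTheory GRing.Theory Num.Theory.
Local Open Scope ring_scope.

Section B_n_Christoffel.
Variables (C : numClosedFieldType) (n : nat).

(* basic invariant u_{m+1}, m : 'I_n  (0-indexed):
   u_m = sum_{i_1<...<i_m} p_{i_1}^2 ... p_{i_m}^2, as a polynomial in p *)
Definition uinv (m : 'I_n) : {mpoly C[n]} :=
  \sum_(h : {set 'I_n} | #|h| == m.+1) \prod_(i in h) 'X_i ^+ 2.

Definition gdown (a b : 'I_n) : {mpoly C[n]} :=
  ((n.-1)%:R^-1 - (a == b)%:R) *: ('X_a * 'X_b).

Variable p : 'I_n -> C.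

Definition gup (a b : 'I_n) : C := (1 - (a == b)%:R) / (p a * p b).

Definition GammaP (a b c : 'I_n) : C :=
  2^-1 * \sum_(l < n) gup a l *
    ((mderiv b (gdown l c)).@[p] + (mderiv c (gdown l b)).@[p]
     - (mderiv l (gdown b c)).@[p]).

(* Jacobian  J m a = d u_m / d p_a  and its inverse  (invmx J) a m = d p_a / d u_m *)
Definition jacU : 'M[C]_n := \matrix_(m, a) (mderiv a (uinv m)).@[p].
Definition dpdu (a m : 'I_n) : C := invmx jacU a m.

Definition gupU (s j : 'I_n) : C :=
  \sum_(a < n) \sum_(b < n) jacU s a * gup a b * jacU j b.

(* Christoffel symbols of the Levi-Civita connection in the u coordinates
   (transformation law of connection coefficients):
   Gamma^i_{jk}(u) = sum_{b,c} (sum_a du_i/dp_a Gamma^a_{bc}(p) - d^2u_i/dp_b dp_c)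
                      dp_b/du_j dp_c/du_k *)
Definition GammaU (i j k : 'I_n) : C :=
  \sum_(b < n) \sum_(c < n)
    ((\sum_(a < n) jacU i a * GammaP a b c) - (mderiv c (mderiv b (uinv i))).@[p])
    * dpdu b j * dpdu c k.

Definition GammaUcontra (s i k : 'I_n) : C :=
  - \sum_(j < n) gupU s j * GammaU i j k.

(* generic points: all p_i nonzero and u a local coordinate system at p *)
Definition generic_point : Prop := (forall a, p a != 0) /\ jacU \in unitmx.

End B_n_Christoffel.

Definition uval (C : numClosedFieldType) (n : nat) (p : 'I_n -> C) : 'I_n -> C :=
  fun m => (uinv C m).@[p].

From HB Require Import structures.
From mathcomp Require Import all_boot all_order all_algebra.
From mathcomp Require Import mpoly.
From mathcomp Require Import ring zify.
Import Order.TTheory GRing.Theory Num.Theory.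
Local Open Scope ring_scope.
Set Implicit Arguments. Unset Strict Implicit. Unset Printing Implicit Defensive.

(* With x_a = p_a^2 the invariants are the elementary symmetric functions
   u_m = e_m(x), so du_m/dp_a = 2 p_a e_(m-1)(x^a), where x^a omits x_a, and in
   the p coordinates the only nonzero Christoffel symbols are Gamma^a_aa = 1/p_a.
   Through the transformation law, Gamma^(si)_k(u) becomes 4 Q_k(u) for any
   polynomials Q_1, ..., Q_n with
     sum_m Q_m(u) e_(m-1)(x^c) = sum_(b <> c) sum_(a <> b) e_(s-1)(x^a) e_(i-2)(x^(b,c))
   for all c.  Give u_m the weight m.  Such Q exist with every term of weight at
   most (s-1) + (i-2) <= 2n-3, because x_c e_k(x^c) = e_(k+1)(x) - e_(k+1)(x^c)
   trades each factor x_c for one unit of weight.  As u_(n-1)^2 alone has weight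
   2n-2, no Q_k is more than linear in u_(n-1). *)

Section ElementarySymmetric.
Variables (R : comRingType) (T : finType).
Implicit Types (x : T -> R) (A h : {set T}) (a : T) (k : nat).

Definition esym x A k : R :=
  \sum_(h : {set T} | (h \subset A) && (#|h| == k)) \prod_(i in h) x i.

Definition esym_pred x A k : R := if k is k'.+1 then esym x A k' else 0.

Lemma esym0 x A : esym x A 0 = 1.
Proof.
rewrite /esym (big_pred1 set0) ?big_set0 // => h /=.
by rewrite cards_eq0 andbC; case: eqP => // ->; rewrite sub0set.
Qed.

Lemma esym_eq0 x A k : (#|A| < k)%N -> esym x A k = 0.
Proof.
move=> ltAk; rewrite /esym big_pred0 // => h.
apply/negbTE/andP => -[/subset_leq_card leA /eqP cardh].
by move: (leq_ltn_trans leA ltAk); rewrite cardh ltnn.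
Qed.

Lemma sum_subsets_setU1 A a k (F : {set T} -> R) : a \in A ->
  \sum_(h : {set T} | (h \subset A) && (#|h| == k.+1) && (a \in h)) F h =
  \sum_(h : {set T} | (h \subset A :\ a) && (#|h| == k)) F (a |: h).
Proof.
move=> aA; rewrite (reindex_onto (fun h => a |: h) (fun h => h :\ a)) /=; last first.
  by move=> h /andP[_ ah]; rewrite setD1K.
apply: eq_bigl => h; rewrite setU11 andbT.
case ah: (a \in h).
  have -> : a |: h = h by apply/setUidPr; rewrite sub1set.
  have -> : (h :\ a == h) = false.
    by apply/negbTE/eqP => hDa; move: ah; rewrite -hDa setD11.
  by rewrite andbF subsetD1 ah !andbF.
rewrite setU1K ?ah // eqxx andbT subsetD1 ah andbT cardsU1 ah add1n eqSS.
by rewrite subUset sub1set aA.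
Qed.

Lemma sum_subsets_setD1 A a k (G : {set T} -> R) : a \in A ->
  \sum_(h : {set T} | (h \subset A) && (#|h| == k.+1))
     (if a \in h then G (h :\ a) else 0) =
  \sum_(h : {set T} | (h \subset A :\ a) && (#|h| == k)) G h.
Proof.
move=> aA; rewrite -big_mkcondr sum_subsets_setU1 //; apply: eq_bigr => h.
by rewrite subsetD1 => /andP[/andP[_ ah] _]; rewrite setU1K.
Qed.

Lemma sum_subsets_setC1 a k (G : {set T} -> R) :
  \sum_(h : {set T} | #|h| == k.+1) (if a \in h then G (h :\ a) else 0) =
  \sum_(h : {set T} | (h \subset [set~ a]) && (#|h| == k)) G h.
Proof.
rewrite -setTD -(sum_subsets_setD1 _ _ (in_setT a)).
by apply: eq_bigl => h; rewrite subsetT.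
Qed.

Lemma esymD1 x A a k : a \in A ->
  esym x A k.+1 = esym x (A :\ a) k.+1 + x a * esym x (A :\ a) k.
Proof.
move=> aA; rewrite /esym (bigID (fun h => a \in h)) /= addrC; congr (_ + _).
  by apply: eq_bigl => h; rewrite subsetD1 andbAC.
rewrite sum_subsets_setU1 // mulr_sumr; apply: eq_bigr => h /andP[hA _].
by rewrite big_setU1 //=; move: hA; rewrite subsetD1 => /andP[].
Qed.

Lemma sum_esymD1 x A k :
  \sum_(a in A) esym x (A :\ a) k = (#|A| - k)%:R * esym x A k.
Proof.
rewrite /esym (exchange_big_dep (fun h => (h \subset A) && (#|h| == k))) /=; last first.
  by move=> a h aA; rewrite subsetD1 => /andP[/andP[]] -> _ ->.
rewrite mulr_sumr; apply: eq_bigr => h /andP[hA /eqP cardh].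
rewrite (eq_bigl (fun a => a \in A :\: h)); last first.
  by move=> a; rewrite subsetD1 hA cardh eqxx !andbT in_setD andbC.
by rewrite sumr_const cardsD (setIidPr hA) cardh mulr_natl.
Qed.

Lemma sum_esymC1 x k :
  \sum_a esym x [set~ a] k = (#|T| - k)%:R * esym x setT k.
Proof.
rewrite -cardsT -sum_esymD1; apply: eq_big => [a|a _]; first by rewrite inE.
by rewrite setTD.
Qed.

End ElementarySymmetric.

Section MonomialDerivatives.
Variables (R : comRingType) (n : nat).
Implicit Types (a i : 'I_n) (h : {set 'I_n}).

Lemma mderivXU a i : mderiv a ('X_i : {mpoly R[n]}) = (i == a)%:R.
Proof.
rewrite mderivX mnm1E; case: eqP => [->|_]; last by rewrite scale0r.
by rewrite -{1}[U_(a)%MM]add0m addmK mpolyX0 scale1r.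
Qed.

Lemma mderiv_prodX2_notin a h : a \notin h ->
  mderiv a (\prod_(i in h) 'X_i ^+ 2 : {mpoly R[n]}) = 0.
Proof.
move=> ah; elim/big_rec: _ => [|i q ih dq]; first by rewrite -[1]/(1%:MP) mderivC.
rewrite mderivM dq mulr0 addr0 expr2 mderivM !mderivXU.
have /negbTE -> : i != a by apply: contraNneq ah => <-.
by rewrite mulr0 mul0r addr0 mul0r.
Qed.

Lemma mderiv_prodX2 a h :
  mderiv a (\prod_(i in h) 'X_i ^+ 2 : {mpoly R[n]}) =
  if a \in h then 2%:R *: ('X_a * \prod_(i in h :\ a) 'X_i ^+ 2) else 0.
Proof.
case: ifP => ah; last by rewrite mderiv_prodX2_notin // ah.
rewrite (big_setD1 a) //= mderivM mderiv_prodX2_notin ?setD11 // mulr0 addr0.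
by rewrite expr2 mderivM mderivXU eqxx mulr1 mul1r scaler_nat mulr2n mulrDl.
Qed.

End MonomialDerivatives.

Section InvariantDerivatives.
Variables (C : numClosedFieldType) (n : nat).
Implicit Types (p : 'I_n -> C) (a b c : 'I_n) (h : {set 'I_n}) (k : nat).

Definition psq p a : C := p a ^+ 2.
Definition esT p k : C := esym (psq p) setT k.
Definition esC1 p c k : C := esym (psq p) [set~ c] k.

Lemma meval_prodX2 p h :
  (\prod_(i in h) 'X_i ^+ 2 : {mpoly C[n]}).@[p] = \prod_(i in h) psq p i.
Proof. by rewrite rmorph_prod; apply: eq_bigr => i _; rewrite rmorphXn /= mevalXU. Qed.

Lemma uvalE p (m : 'I_n) : uval p m = esT p m.+1.
Proof.
rewrite /uval /uinv raddf_sum /esT /esym; apply: eq_big => [h|h _]; first by rewrite subsetT.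
exact: meval_prodX2.
Qed.

Lemma mderiv_uinv a (m : 'I_n) : mderiv a (uinv C m) =
  \sum_(h : {set 'I_n} | #|h| == m.+1)
     (if a \in h then 2%:R *: ('X_a * \prod_(i in h :\ a) 'X_i ^+ 2) else 0).
Proof.
rewrite /uinv (big_morph _ (@mderivD _ _ a) (@mderiv0 _ _ a)).
by apply: eq_bigr => h _; rewrite mderiv_prodX2.
Qed.

Lemma meval_mderiv_uinv p a (m : 'I_n) :
  (mderiv a (uinv C m)).@[p] = 2 * p a * esC1 p a m.
Proof.
rewrite mderiv_uinv (big_morph _ (mevalD p) (meval0 p)) /esC1 /esym mulr_sumr -sum_subsets_setC1.
apply: eq_bigr => h _; case: ifP => ah; last by rewrite meval0.
by rewrite mevalZ mevalM mevalXU meval_prodX2 mulrA.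
Qed.

Lemma meval_mderiv2_uinv p b c (i : 'I_n) :
  (mderiv c (mderiv b (uinv C i))).@[p] =
  if b == c then 2 * esC1 p b i
  else 4 * p b * p c * esym_pred (psq p) ([set~ b] :\ c) i.
Proof.
rewrite mderiv_uinv (big_morph _ (@mderivD _ _ c) (@mderiv0 _ _ c)).
rewrite (big_morph _ (mevalD p) (meval0 p)); case: eqP => [<-|/eqP neq_bc].
  rewrite /esC1 /esym mulr_sumr -sum_subsets_setC1; apply: eq_bigr => h _.
  case: ifP => bh; last by rewrite mderiv0 meval0.
  rewrite mderivZ mderivM mderiv_prodX2_notin ?setD11 // mulr0 addr0.
  by rewrite mderivXU eqxx mul1r mevalZ meval_prodX2.
pose G h' := if c \in h' then 4 * p b * p c * \prod_(j in h' :\ c) psq p j else 0.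
transitivity (\sum_(h : {set 'I_n} | #|h| == i.+1) (if b \in h then G (h :\ b) else 0)).
  apply: eq_bigr => h _; case: ifP => bh; last by rewrite mderiv0 meval0.
  rewrite mderivZ mderivM mderivXU (negbTE neq_bc) mul0r add0r mderiv_prodX2 /G.
  case: ifP => ch; last by rewrite mulr0 scaler0 meval0.
  rewrite !(mevalZ, mevalM, mevalXU) meval_prodX2; ring.
rewrite sum_subsets_setC1; case: (i : nat) => [|i'] /=.
  rewrite big1 ?mulr0 // => h /andP[_]; rewrite cards_eq0 => /eqP ->.
  by rewrite /G in_set0.
rewrite /esym mulr_sumr -sum_subsets_setD1; last by rewrite !inE eq_sym.
by apply: eq_bigr => h _; rewrite /G; case: ifP.
Qed.

End InvariantDerivatives.

Section ChristoffelP.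
Variables (C : numClosedFieldType) (n : nat).
Implicit Types (p : 'I_n -> C) (a b c l : 'I_n).

Local Notation mu := ((n.-1)%:R^-1 : C).

Lemma meval_mderiv_gdown p b l c : (mderiv b (gdown C l c)).@[p] =
  (mu - (l == c)%:R) * ((l == b)%:R * p c + p l * (c == b)%:R).
Proof.
rewrite /gdown mderivZ mderivM !mderivXU mevalZ mevalD !mevalM !mevalXU.
by rewrite !rmorph_nat.
Qed.

Lemma sum_kroneckerl a (F : 'I_n -> C) : \sum_l (a == l)%:R * F l = F a.
Proof.
rewrite (bigD1 a) //= eqxx mul1r big1 ?addr0 // => l.
by rewrite eq_sym => /negbTE ->; rewrite mul0r.
Qed.

Lemma sum_kroneckerr a (F : 'I_n -> C) : \sum_l (l == a)%:R * F l = F a.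
Proof. by rewrite -(sum_kroneckerl a F); apply: eq_bigr => l _; rewrite eq_sym. Qed.

Ltac case_eqs := rewrite ?eqxx /=; try match goal with |- context [?x == ?y] =>
  case: (eqVneq x y) => [?|?]; [subst|]; case_eqs end;
  try match goal with H : is_true (?z != ?z) |- _ => by rewrite eqxx in H end.

Lemma GammaP_diag p a b c : (forall a, p a != 0) -> (2 <= n)%N ->
  GammaP p a b c = (a == b)%:R * (a == c)%:R / p a.
Proof.
move=> p_neq0 n_ge2.
have n1_neq0 : (n.-1)%:R != 0 :> C by rewrite pnatr_eq0 -lt0n; case: n n_ge2 => [|[]].
have summand l : gup p a l * ((mderiv b (gdown C l c)).@[p]
      + (mderiv c (gdown C l b)).@[p] - (mderiv l (gdown C b c)).@[p]) =
    (b == c)%:R / p a *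
    (2 * ((mu - (l == b)%:R) - (a == l)%:R * mu + (a == l)%:R * (l == b)%:R)).
  by rewrite !meval_mderiv_gdown /gup; case_eqs; field; rewrite ?n1_neq0 ?p_neq0.
have sum_delta : \sum_l (l == b)%:R = 1 :> C.
  by rewrite -[RHS](sum_kroneckerr b (fun=> 1)); apply: eq_bigr => l _; rewrite mulr1.
have sum_mu : \sum_(l < n) mu = 1 + mu.
  rewrite sumr_const card_ord -[X in _ *+ X](prednK (ltnW n_ge2)).
  by rewrite mulrSr -[mu *+ _]mulr_natr mulVf.
have sum_bracket : \sum_l ((mu - (l == b)%:R) - (a == l)%:R * mu
    + (a == l)%:R * (l == b)%:R) = (a == b)%:R.
  by rewrite big_split sumrB sumrB /= sum_mu sum_delta !sum_kroneckerl; ring.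
rewrite /GammaP (eq_bigr _ (fun l _ => summand l)) -mulr_sumr -mulr_sumr sum_bracket.
by case_eqs; field; rewrite p_neq0.
Qed.

End ChristoffelP.

Section WeightedExpansions.
Variables (C : numClosedFieldType) (n : nat).
Implicit Types (p : 'I_n -> C) (c : 'I_n) (v w : ('I_n -> C) -> 'I_n -> C).
Implicit Types (mo : 'X_{1..n}) (D k : nat).

Definition mweight mo : nat := (\sum_(t < n) t.+1 * mo t)%N.

Lemma mweightD m1 m2 : mweight (m1 + m2)%MM = (mweight m1 + mweight m2)%N.
Proof. by rewrite /mweight -big_split /=; apply: eq_bigr => t _; rewrite mnmDE mulnDr. Qed.

Lemma mweight0 : mweight 0%MM = 0%N.
Proof. by rewrite /mweight big1 // => t _; rewrite mnm0E muln0. Qed.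

Lemma mweight_ge (t : 'I_n) mo : (t.+1 * mo t <= mweight mo)%N.
Proof. by rewrite /mweight (bigD1 t) //= leq_addr. Qed.

(* e_k(x) in terms of the invariants; u_k is the variable 'X_(k-1). *)
Definition esT_mpoly k : {mpoly C[n]} :=
  if k is k'.+1 then (if insub k' is Some t then 'X_t else 0) else 1.

Lemma meval_esT_mpoly p k : (esT_mpoly k).@[uval p] = esT p k.
Proof.
case: k => [|k] /=; first by rewrite meval1 /esT esym0.
case: insubP => [t _ val_t|k_ge_n]; first by rewrite mevalXU uvalE val_t.
by rewrite meval0 /esT esym_eq0 // cardsT card_ord ltnS leqNgt.
Qed.

Lemma mweight_esT_mpoly k mo : mo \in msupp (esT_mpoly k) -> (mweight mo <= k)%N.
Proof.
case: k => [|k] /=; first by rewrite msupp1 inE => /eqP ->; rewrite mweight0.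
case: insubP => [t _ val_t|_]; last by rewrite msupp0.
rewrite msuppX inE => /eqP ->.
rewrite /mweight (bigD1 t) //= mnm1E eqxx muln1 big1 ?addn0 ?val_t //.
by move=> t' /negbTE; rewrite mnm1E eq_sym => ->; rewrite muln0.
Qed.

Lemma psq_mul_esC1 p c k : psq p c * esC1 p c k = esT p k.+1 - esC1 p c k.+1.
Proof. by rewrite /esT /esC1 (esymD1 _ _ (in_setT c)) setTD addrC addKr. Qed.

Lemma esC1S p c k : esC1 p c k.+1 = esT p k.+1 - psq p c * esC1 p c k.
Proof. by rewrite psq_mul_esC1 opprB addrC subrK. Qed.

Lemma esC1_eq0 p c k : (n <= k)%N -> esC1 p c k = 0.
Proof.
move=> n_le_k; rewrite /esC1 esym_eq0 // cardsC1 card_ord.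
by have := ltn_ord c; lia.
Qed.

Definition expandable D v : Prop :=
  exists P : nat -> {mpoly C[n]},
    (forall k mo, mo \in msupp (P k) -> (mweight mo + k <= D)%N) /\
    (forall p c, v p c = \sum_(k < n) (P k).@[uval p] * esC1 p c k).

Lemma expandable_ext D v w :
  (forall p c, v p c = w p c) -> expandable D v -> expandable D w.
Proof. by move=> vw [P [P_wt vP]]; exists P; split=> // p c; rewrite -vw. Qed.

Lemma expandable0 D : expandable D (fun _ _ => 0).
Proof.
exists (fun _ => 0); split=> [k mo|p c]; first by rewrite msupp0.
by rewrite big1 // => k _; rewrite meval0 mul0r.
Qed.

Lemma expandableD D v w :
  expandable D v -> expandable D w -> expandable D (fun p c => v p c + w p c).
Proof.
move=> [P [P_wt vP]] [Q [Q_wt wQ]]; exists (fun k => P k + Q k); split.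
  by move=> k mo /msuppD_le; rewrite mem_cat => /orP[/P_wt|/Q_wt].
move=> p c; rewrite vP wQ -big_split /=.
by apply: eq_bigr => k _; rewrite mevalD mulrDl.
Qed.

Lemma expandableZ D a v : expandable D v -> expandable D (fun p c => a * v p c).
Proof.
move=> [P [P_wt vP]]; exists (fun k => a *: P k); split.
  by move=> k mo /msuppZ_le /P_wt.
by move=> p c; rewrite vP mulr_sumr; apply: eq_bigr => k _; rewrite mevalZ mulrA.
Qed.

Lemma expandableB D v w :
  expandable D v -> expandable D w -> expandable D (fun p c => v p c - w p c).
Proof.
move=> ev ew; apply: expandableD ev _.
by apply: expandable_ext (expandableZ (-1) ew) => p c; rewrite mulN1r.
Qed.

Lemma expandable_sum D (r : seq 'I_n) (F : 'I_n -> ('I_n -> C) -> 'I_n -> C) :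
  (forall t, expandable D (F t)) -> expandable D (fun p c => \sum_(t <- r) F t p c).
Proof.
move=> eF; elim: r => [|t r IHr].
  by apply: expandable_ext (expandable0 D) => p c; rewrite big_nil.
by apply: expandable_ext (expandableD (eF t) IHr) => p c; rewrite big_cons.
Qed.

Lemma expandable_term D k (Q : {mpoly C[n]}) :
  (forall mo, mo \in msupp Q -> (mweight mo + k <= D)%N) ->
  expandable D (fun p c => Q.@[uval p] * esC1 p c k).
Proof.
move=> Q_wt; case: (ltnP k n) => [lt_kn|n_le_k]; last first.
  by apply: expandable_ext (expandable0 D) => p c; rewrite esC1_eq0 // mulr0.
exists (fun k' => if k' == k then Q else 0); split.
  by move=> k' mo; case: eqP => [->|_]; [apply: Q_wt | rewrite msupp0].
move=> p c; rewrite (bigD1 (Ordinal lt_kn)) //= eqxx big1 ?addr0 // => k'.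
by rewrite -val_eqE /= => /negbTE ->; rewrite meval0 mul0r.
Qed.

Lemma expandable_esC1 k : expandable k (fun p c => esC1 p c k).
Proof.
apply: expandable_ext (@expandable_term k k 1 _) => [p c|mo].
  by rewrite meval1 mul1r.
by rewrite msupp1 inE => /eqP ->; rewrite mweight0.
Qed.

Lemma expandable_mul_esT D k v :
  expandable D v -> expandable (D + k) (fun p c => esT p k * v p c).
Proof.
move=> [P [P_wt vP]]; exists (fun k' => esT_mpoly k * P k'); split.
  move=> k' mo /msuppM_le /allpairsP [[m1 m2] /= [m1_supp m2_supp ->]].
  rewrite mweightD -addnA addnC leq_add //; first exact: P_wt m2_supp.
  exact: mweight_esT_mpoly m1_supp.
move=> p c; rewrite vP mulr_sumr; apply: eq_bigr => k' _.
by rewrite mevalM meval_esT_mpoly mulrA.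
Qed.

Lemma expandable_mul_psq D v :
  expandable D v -> expandable D.+1 (fun p c => psq p c * v p c).
Proof.
move=> [P [P_wt vP]].
pose F (k : 'I_n) p c := (esT_mpoly k.+1 * P k).@[uval p] * esC1 p c 0
                          - (P k).@[uval p] * esC1 p c k.+1.
apply: expandable_ext (expandable_sum (index_enum 'I_n) (F := F) _) => [p c|k].
  rewrite vP mulr_sumr; apply: eq_bigr => k _.
  rewrite /F /esC1 esym0 mulr1 mevalM meval_esT_mpoly mulrCA psq_mul_esC1.
  by rewrite mulrBr mulrC [_ * esC1 _ _ _]mulrC.
apply: expandableB; apply: expandable_term => mo.
  rewrite addn0 => /msuppM_le /allpairsP [[m1 m2] /= [m1_supp m2_supp ->]].
  have := @mweight_esT_mpoly k.+1 _ m1_supp; have := P_wt _ _ m2_supp.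
  by rewrite mweightD; lia.
by move=> /P_wt; rewrite addnS ltnS.
Qed.

Lemma expandable_mul_esC1 D k v :
  expandable D v -> expandable (D + k) (fun p c => esC1 p c k * v p c).
Proof.
move=> ev; elim: k => [|k IHk].
  by rewrite addn0; apply: expandable_ext ev => p c; rewrite /esC1 esym0 mul1r.
have := expandable_mul_psq IHk; rewrite -addnS => e_psq.
apply: expandable_ext (expandableB (expandable_mul_esT k.+1 ev) e_psq) => p c.
by rewrite esC1S mulrBl mulrA.
Qed.

End WeightedExpansions.

Section NestedSums.
Variables (C : numClosedFieldType) (n : nat).
Implicit Types (p : 'I_n -> C) (c : 'I_n) (s t : nat).

Lemma sum_esC1_setC1 p c s :
  \sum_(b in [set~ c]) esC1 p b s = (n - s)%:R * esT p s - esC1 p c s.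
Proof.
have := sum_esymC1 (psq p) s; rewrite (bigD1 c) //= card_ord => <-.
by rewrite addrC addrK; apply: eq_bigl => b; rewrite !inE.
Qed.

Lemma sum_esym_setC1D1 p c t :
  \sum_(b in [set~ c]) esym (psq p) ([set~ c] :\ b) t = (n.-1 - t)%:R * esC1 p c t.
Proof. by rewrite sum_esymD1 cardsC1 card_ord. Qed.

Definition cross_sum s t p c : C :=
  \sum_(b in [set~ c]) esC1 p b s * esym (psq p) ([set~ c] :\ b) t.

Lemma cross_sum0 t p c : cross_sum 0 t p c = (n.-1 - t)%:R * esC1 p c t.
Proof.
rewrite /cross_sum -sum_esym_setC1D1.
by apply: eq_bigr => b _; rewrite /esC1 esym0 mul1r.
Qed.

(* Peel x_b off both factors with esymD1 and sum over b. *)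
Lemma cross_sumS s t p c : cross_sum s.+1 t p c =
  (n.-1 - t)%:R * (esT p s.+1 * esC1 p c t) - (n - s)%:R * (esT p s * esC1 p c t.+1)
  + esC1 p c s * esC1 p c t.+1 + cross_sum s t.+1 p c.
Proof.
rewrite /cross_sum (eq_bigr (fun b => esT p s.+1 * esym (psq p) ([set~ c] :\ b) t
    - esC1 p c t.+1 * esC1 p b s
    + esC1 p b s * esym (psq p) ([set~ c] :\ b) t.+1)); last first.
  by move=> b b_neq_c; rewrite esC1S /esC1 (esymD1 _ _ b_neq_c); ring.
rewrite big_split sumrB /= -!mulr_sumr sum_esym_setC1D1 sum_esC1_setC1; ring.
Qed.

Lemma expandable_cross_sum s t : expandable (s + t) (cross_sum s t).
Proof.
elim: s t => [|s IHs] t.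
  apply: expandable_ext (expandableZ _ (expandable_esC1 C n t)) => p c.
  by rewrite cross_sum0.
have e1 := expandable_mul_esT s.+1 (expandableZ (n.-1 - t)%:R (expandable_esC1 C n t)).
have e2 := expandable_mul_esT s (expandableZ (n - s)%:R (expandable_esC1 C n t.+1)).
have e3 := expandable_mul_esC1 s (expandable_esC1 C n t.+1).
have e4 := IHs t.+1.
have -> : (s.+1 + t = t + s.+1)%N by rewrite addnC.
rewrite -addSnnS addnC in e4; rewrite addSnnS in e2 e3.
apply: expandable_ext (expandableD (expandableD (expandableB e1 e2) e3) e4) => p c.
by rewrite cross_sumS; ring.
Qed.

Definition nested_sum s i p c : C :=
  \sum_(b in [set~ c]) (\sum_(a in [set~ b]) esC1 p a s)
     * esym_pred (psq p) ([set~ c] :\ b) i.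

Lemma expandable_nested_sum s i : expandable (s + i.-1) (nested_sum s i).
Proof.
case: i => [|t] /=.
  apply: expandable_ext (expandable0 _ _ _) => p c.
  by rewrite /nested_sum big1 // => b _; rewrite mulr0.
have := expandable_mul_esT s (expandableZ ((n - s)%:R * (n.-1 - t)%:R) (expandable_esC1 C n t)).
rewrite addnC => e1; apply: expandable_ext (expandableB e1 (expandable_cross_sum s t)) => p c.
rewrite /nested_sum (eq_bigr (fun b => (n - s)%:R * esT p s * esym (psq p) ([set~ c] :\ b) t
   - esC1 p b s * esym (psq p) ([set~ c] :\ b) t)); last first.
  by move=> b _; rewrite sum_esC1_setC1 mulrBl.
by rewrite sumrB -mulr_sumr sum_esym_setC1D1 /cross_sum; ring.
Qed.

End NestedSums.

Section ChristoffelU.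
Variables (C : numClosedFieldType) (n : nat).
Implicit Types (p : 'I_n -> C) (a b c s i k : 'I_n).

Lemma jacUE p m a : jacU p m a = 2 * p a * esC1 p a m.
Proof. by rewrite mxE meval_mderiv_uinv. Qed.

Definition gupM p : 'M[C]_n := \matrix_(a, b) gup p a b.

Definition GammaUP p i : 'M[C]_n := \matrix_(b, c)
  ((\sum_a jacU p i a * GammaP p a b c) - (mderiv c (mderiv b (uinv C i))).@[p]).

Lemma GammaUcontra_mx p s i k : jacU p \in unitmx ->
  GammaUcontra p s i k =
  - (jacU p *m gupM p *m GammaUP p i *m invmx (jacU p)) s k.
Proof.
move=> jac_unit; set J := jacU p; set D := invmx J.
have gupUE j : gupU p s j = (J *m gupM p *m J^T) s j.
  rewrite /gupU mxE; under [RHS]eq_bigr => b _ do rewrite mxE mulr_suml.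
  rewrite [RHS]exchange_big; apply: eq_bigr => a _; apply: eq_bigr => b _.
  by rewrite !mxE.
have GammaUE j : GammaU p i j k = (D^T *m GammaUP p i *m D) j k.
  rewrite /GammaU mxE; under [RHS]eq_bigr => c _ do rewrite mxE mulr_suml.
  rewrite [RHS]exchange_big; apply: eq_bigr => b _; apply: eq_bigr => c _.
  by rewrite !mxE /dpdu -/J -/D; ring.
rewrite /GammaUcontra (eq_bigr _ (fun j _ => congr2 *%R (gupUE j) (GammaUE j))).
transitivity (- (J *m gupM p *m J^T *m (D^T *m GammaUP p i *m D)) s k).
  by rewrite [in RHS]mxE.
rewrite -!mulmxA [J^T *m _]mulmxA -trmx_mul mulVmx // trmx1 mul1mx.
by rewrite !mulmxA.
Qed.

Lemma GammaUP_entry p i b c : (forall a, p a != 0) -> (2 <= n)%N ->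
  GammaUP p i b c =
  if b == c then 0 else - (4 * p b * p c * esym_pred (psq p) ([set~ b] :\ c) i).
Proof.
move=> p_neq0 n_ge2; rewrite mxE.
rewrite (eq_bigr (fun a => (a == b)%:R * ((a == c)%:R * (2 * esC1 p a i)))); last first.
  by move=> a _; rewrite jacUE GammaP_diag //; field; rewrite p_neq0.
rewrite sum_kroneckerr meval_mderiv2_uinv; case: eqP => [->|_].
  by rewrite mul1r subrr.
by rewrite mul0r sub0r.
Qed.

Lemma jac_gup_entry p s b : (forall a, p a != 0) ->
  (jacU p *m gupM p) s b = 2 / p b * \sum_(a in [set~ b]) esC1 p a s.
Proof.
move=> p_neq0; rewrite mxE (bigD1 b) //= !mxE /gup eqxx subrr mul0r mulr0 add0r.
rewrite mulr_sumr; apply: eq_big => [a|a]; first by rewrite !inE.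
move=> a_neq_b; rewrite [gupM _ _ _]mxE /gup (negbTE a_neq_b) subr0 jacUE.
by field; rewrite !p_neq0.
Qed.

Lemma jac_gup_GammaUP_entry p s i c : (forall a, p a != 0) -> (2 <= n)%N ->
  (jacU p *m gupM p *m GammaUP p i) s c = - (8 * p c) * nested_sum s i p c.
Proof.
move=> p_neq0 n_ge2; rewrite mxE (bigD1 c) //= GammaUP_entry // eqxx mulr0 add0r.
rewrite /nested_sum mulr_sumr; apply: eq_big => [b|b b_neq_c]; first by rewrite !inE.
rewrite jac_gup_entry // GammaUP_entry // (negbTE b_neq_c).
have -> : [set~ b] :\ c = [set~ c] :\ b by apply/setP => y; rewrite !inE andbC.
by field; rewrite p_neq0.
Qed.

Lemma GammaUcontra_expansion p s i k (Q : nat -> {mpoly C[n]}) :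
  generic_point p -> (2 <= n)%N ->
  (forall p c, nested_sum s i p c = \sum_(m < n) (Q m).@[uval p] * esC1 p c m) ->
  GammaUcontra p s i k = (4 *: Q k).@[uval p].
Proof.
move=> [p_neq0 jac_unit] n_ge2 nested_sumE.
pose q : 'rV[C]_n := \row_m (Q m).@[uval p].
have row_JGA : row s (jacU p *m gupM p *m GammaUP p i) = - 4 *: (q *m jacU p).
  apply/rowP => c; rewrite [LHS]mxE jac_gup_GammaUP_entry // nested_sumE !mxE.
  rewrite !mulr_sumr; apply: eq_bigr => m _.
  by rewrite [q _ _]mxE jacUE; ring.
have -> : GammaUcontra p s i k = 4 * q 0 k.
  have entry_row (M : 'M[C]_n) : M s k = row s M 0 k by rewrite mxE.
  rewrite GammaUcontra_mx // entry_row row_mul row_JGA -scalemxAl mulmxK //.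
  by rewrite mxE mulNr opprK.
by rewrite mxE mevalZ.
Qed.

End ChristoffelU.

Unset Implicit Arguments.

(* j is the 0-indexed position of u_{n-1}, i.e. j = n - 2 *)
Theorem mainTheorem12 (C : numClosedFieldType) (n : nat) (hn : (2 <= n)%N)
    (j : 'I_n) (hj : j.+2 = n) (s i k : 'I_n) :
  exists P : {mpoly C[n]},
    (forall m : 'X_{1..n}, m \in msupp P -> (m j <= 1)%N) /\
    (forall p : 'I_n -> C, generic_point p ->
       GammaUcontra p s i k = P.@[uval p]).
Proof.
have [Q [Q_wt nested_sumE]] := expandable_nested_sum C n s i.
exists (4 *: Q k); split=> [mo /msuppZ_le /Q_wt wt_mo|p p_generic].
  have := mweight_ge j mo; have := ltn_ord s; have := ltn_ord i.
  by move: wt_mo hj; clear; nia.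
exact: GammaUcontra_expansion.
Qed.
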